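(* Let $G$ be a group of order $80$ whose Sylow $5$-subgroups are not normal. Then every connected Cayley graph on $G$ has a hamiltonian cycle.
   Context: For a group $G$ and a subset $S \subseteq G$, the Cayley graph $\mathrm{Cay}(G;S)$ has vertex set $G$, with $g$ adjacent to $gs$ for every $g \in G$ and $s \in S \cup S^{-1}$; it is connected iff $S$ generates $G$. *)

From mathcomp Require Import all_boot all_fingroup all_solvable.
Set Implicit Arguments. Unset Strict Implicit. Unset Printing Implicit Defensive.
Local Open Scope group_scope.

Definition cayley_adj (gT : finGroupType) (S : {set gT}) : rel gT :=
  fun g h => (g^-1 * h \in S) || (h^-1 * g \in S).

Definition hamiltonian_cycle (T : finType) (e : rel T) (c : seq T) : bool :=
  [&& uniq c, size c == #|T| & path.cycle e c].

Definition hamiltonian (T : finType) (e : rel T) : Prop :=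
  exists c : seq T, hamiltonian_cycle e c.

From mathcomp Require Import all_boot all_fingroup all_solvable.
Set Implicit Arguments. Unset Strict Implicit. Unset Printing Implicit Defensive.

(* Sylow's theorems force n_5 = 16, so the 64 elements of order 5 leave room
   for exactly one Sylow 2-subgroup P, and G = P x| <[x]> for any x outside P.
   As every element outside P has order 5, x centralises no nontrivial element
   of P; counting fixed points modulo 5 then shows that x normalises no proper
   nontrivial subgroup of P, so P is elementary abelian of order 16 and, for
   1 != v in P, the conjugates e_j = v ^ x^j satisfy e_4 = e_0 e_1 e_2 e_3 and
   give coordinates e_0^b0 e_1^b1 e_2^b2 e_3^b3 x^k on G.  A connected Cayley
   graph contains generators x and y = v x^m; in these coordinates right
   multiplication by x and by y are explicit maps on 80 codes, and for each of
   the five values of m a hamiltonian cycle of the code graph is checked by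
   computation. *)

Lemma dvdn80_1mod5 d : d %| 80 -> d %% 5 = 1 -> d = 1 \/ d = 16.
Proof.
rewrite dvdn_divisors // => dv_d.
have : all (fun d => (d %% 5 == 1) ==> (d == 1) || (d == 16)) (divisors 80) by vm_compute.
by move=> /allP /(_ d dv_d) /implyP d_eq /eqP /d_eq /orP[] /eqP; [left | right].
Qed.

Lemma hamiltonian_inj (T1 T2 : finType) (e1 : rel T1) (e2 : rel T2) (f : T1 -> T2) :
  injective f -> #|T1| = #|T2| -> {homo f : a b / e1 a b >-> e2 a b} ->
  hamiltonian e1 -> hamiltonian e2.
Proof.
move=> inj_f cardT homo_f [c /and3P[uniq_c /eqP size_c cycle_c]].
exists (map f c); apply/and3P; split.
- by rewrite map_inj_uniq.
- by rewrite size_map size_c cardT.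
- by rewrite path.cycle_map (path.sub_cycle _ cycle_c).
Qed.

(* The code ((b0, b1, b2, b3), k) stands for e_0^b0 e_1^b1 e_2^b2 e_3^b3 x^k,
   where e_j = v ^ x^j (see code_val). *)
Definition bits := (bool * bool * bool * bool)%type.
Definition code := (bits * 'I_5)%type.

Definition flip (j : nat) (b : bits) : bits :=
  let: (b0, b1, b2, b3) := b in
  match j with
  | 0 => (~~ b0, b1, b2, b3)
  | 1 => (b0, ~~ b1, b2, b3)
  | 2 => (b0, b1, ~~ b2, b3)
  | _ => (b0, b1, b2, ~~ b3)
  end.

Definition flip_e (j : nat) (b : bits) : bits :=
  if j == 4 then flip 3 (flip 2 (flip 1 (flip 0 b))) else flip j b.

Definition succ5 (k : 'I_5) : 'I_5 := Ordinal (ltn_pmod k.+1 (isT : 0 < 5)).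

Definition mul_x (c : code) : code := (c.1, succ5 c.2).
(* Right multiplication by v uses x^k v = e_(-k) x^k and e_4 = e_0 e_1 e_2 e_3. *)
Definition mul_v (c : code) : code := (flip_e ((5 - c.2) %% 5) c.1, c.2).
Definition mul_y (m : nat) (c : code) : code := iter m mul_x (mul_v c).

Definition code_adj (m : nat) : rel code :=
  fun c d => [|| d == mul_x c, c == mul_x d, d == mul_y m c | c == mul_y m d].

(* Moves 0, 1, 2, 3 of a route are right multiplications by x, x^-1, v x^m and
   its inverse; only the resulting cycle is checked, so this decoding is never
   proved correct. *)
Definition step (m : nat) (c : code) (l : nat) : code :=
  match l with
  | 0 => mul_x c
  | 1 => iter 4 mul_x c
  | 2 => mul_y m c
  | _ => mul_v (iter (5 - m) mul_x c)
  end.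

Definition walk (m : nat) (w : seq nat) : seq code :=
  let c0 := ((false, false, false, false), ord0) in c0 :: scanl (step m) c0 w.

Definition route (m : nat) : seq nat :=
  match m with
  | 0 => [:: 2; 0; 2; 1; 2; 1; 1; 2; 1; 1; 1; 1; 2; 1; 1; 2; 0; 0; 2; 1; 1; 1; 1;
           2; 1; 1; 2; 1; 2; 0; 0; 2; 1; 1; 1; 1; 2; 1; 1; 1; 1; 2; 0; 2; 0; 0;
           0; 0; 2; 0; 0; 0; 0; 2; 0; 0; 0; 0; 2; 0; 0; 2; 1; 2; 1; 1; 1; 1; 2;
           1; 1; 1; 1; 2; 1; 2; 0; 0; 0]
  | 1 => [:: 3; 1; 1; 3; 1; 2; 0; 0; 2; 1; 2; 0; 3; 3; 1; 3; 0; 3; 1; 2; 1; 1; 2;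
           0; 0; 3; 3; 1; 2; 1; 1; 3; 3; 3; 1; 1; 3; 0; 3; 1; 3; 3; 3; 1; 1; 1;
           1; 3; 3; 3; 3; 1; 1; 1; 2; 2; 2; 0; 2; 0; 3; 0; 0; 0; 3; 1; 2; 1; 3;
           0; 0; 0; 0; 2; 1; 1; 2; 2; 1]
  | 2 => [:: 3; 0; 3; 0; 2; 1; 3; 3; 1; 1; 1; 1; 3; 0; 0; 0; 0; 2; 1; 2; 1; 2; 2;
           2; 1; 3; 0; 3; 0; 2; 1; 2; 2; 2; 2; 0; 0; 2; 1; 2; 2; 2; 2; 1; 1; 2;
           1; 2; 2; 1; 1; 1; 2; 1; 2; 0; 3; 0; 2; 1; 3; 3; 3; 0; 0; 3; 3; 3; 3;
           1; 2; 0; 0; 3; 0; 0; 2; 0; 3]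
  | 3 => [:: 0; 2; 1; 2; 1; 2; 2; 0; 0; 3; 0; 0; 3; 1; 1; 1; 3; 1; 1; 2; 0; 0; 2;
           2; 2; 1; 3; 0; 3; 0; 3; 3; 0; 0; 2; 1; 3; 0; 0; 3; 0; 0; 3; 3; 3; 3;
           1; 1; 1; 1; 2; 2; 1; 2; 1; 1; 2; 0; 3; 0; 3; 1; 1; 2; 0; 2; 2; 1; 3;
           3; 3; 0; 0; 2; 1; 3; 1; 1; 3]
  | _ => [:: 3; 1; 3; 0; 3; 3; 3; 1; 3; 3; 0; 2; 2; 1; 2; 2; 1; 1; 2; 2; 1; 1; 3;
           0; 0; 3; 0; 3; 0; 0; 3; 3; 1; 1; 3; 0; 0; 3; 1; 3; 0; 2; 1; 1; 3; 0;
           0; 2; 0; 0; 0; 0; 3; 3; 3; 0; 3; 3; 1; 1; 2; 2; 1; 2; 1; 3; 3; 0; 2;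
           0; 3; 0; 2; 1; 2; 1; 1; 2; 1]
  end.

Lemma card_code : #|{: code}| = 80.
Proof. by rewrite !card_prod !card_bool card_ord. Qed.

Lemma code_hamiltonian m : m < 5 -> hamiltonian (code_adj m).
Proof.
move=> lt_m5; exists (walk m (route m)); rewrite /hamiltonian_cycle card_code.
by move: m lt_m5; do 5?case=> //; vm_compute.
Qed.

Local Open Scope group_scope.

Lemma cayley_adj_mulr (gT : finGroupType) (S : {set gT}) g s :
  s \in S -> cayley_adj S g (g * s).
Proof. by rewrite /cayley_adj mulKg => ->. Qed.

Lemma cayley_adj_sym (gT : finGroupType) (S : {set gT}) : symmetric (cayley_adj S).
Proof. by move=> g h; rewrite /cayley_adj orbC. Qed.

Lemma expg_negb (gT : finGroupType) (a : gT) (b : bool) :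
  a ^+ 2 = 1 -> a ^+ (~~ b) = a ^+ b * a.
Proof. by case: b => /= a2; rewrite ?mul1g // -expgSr a2. Qed.

Lemma generator_notin (gT : finGroupType) (S : {set gT}) (H : {group gT}) :
  <<S>> = [set: gT] -> #|H| < #|[set: gT]| -> exists2 s, s \in S & s \notin H.
Proof.
move=> genS ltHG; apply/subsetPn; apply: contraTN ltHG => sSH.
by rewrite -leqNgt -genS subset_leq_card // gen_subG.
Qed.

Lemma card_order_prime (gT : finGroupType) (G : {group gT}) p :
  prime p -> (#|G|`_p)%N = p -> #|[set g in G | #[g] == p]| = (#|'Syl_p(G)| * p.-1)%N.
Proof.
move=> p_pr Gp; rewrite -sum1_card (partition_big (fun g => <[g]>%G) (mem 'Syl_p(G))) /=.
  rewrite -sum_nat_const; apply: eq_bigr => Y; rewrite inE pHallE Gp => /andP[sYG /eqP cardY].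
  have cardY1 : #|Y :\ 1| = p.-1 by move: cardY; rewrite (cardsD1 1) group1 => <-.
  rewrite -cardY1 -sum1_card; apply: eq_bigl => g; rewrite !inE.
  apply/andP/andP => [[/andP[_ /eqP og] /eqP <-] | [ntg gY]].
    by rewrite -order_eq1 og /= cycle_id eqn_leq leqNgt prime_gt1.
  have og : #[g] = p by apply/(prime_nt_dvdP p_pr); rewrite ?order_eq1 // -cardY order_dvdG.
  split; first by rewrite og eqxx andbT (subsetP sYG).
  apply/eqP/group_inj/eqP.
  by rewrite eqEcard cycle_subG gY cardY /= -og.
move=> g; rewrite !inE => /andP[gG /eqP og].
by rewrite pHallE cycle_subG gG -orderE og Gp /=.
Qed.

Section Order80.

Variable gT : finGroupType.
Hypothesis cardG : #|[set: gT]| = 80.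
Hypothesis Syl5_not_normal :
  forall P : {group gT}, P \in 'Syl_5([set: gT]) -> ~~ (P <| [set: gT]).

Lemma card_Syl5 : #|'Syl_5([set: gT])| = 16.
Proof.
have := card_Syl_dvd 5 [set: gT]; rewrite cardG => /dvdn80_1mod5.
case/(_ (card_Syl_mod _ (isT : prime 5))) => // /eqP /normal_sylowP[P sylP nPG].
by move: (@Syl5_not_normal P); rewrite inE sylP nPG => /(_ isT).
Qed.

Lemma normal_Sylow2 :
  exists P : {group gT}, [/\ P <| [set: gT], #|P| = 16 & forall g, g \notin P -> #[g] = 5].
Proof.
have [P sylP] := Sylow_exists 2 [set: gT].
have cardP : #|P| = 16 by rewrite (card_Hall sylP) cardG p_part.
set A := [set g in [set: gT] | #[g] == 5].
have cardA : #|A| = 64.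
  by rewrite card_order_prime ?card_Syl5 // cardG p_part.
have notA_P g : g \in P -> #[g] != 5.
  by move=> gP; apply: contraTneq (order_dvdG gP) => ->; rewrite cardP.
have PUA : P :|: A = [set: gT].
  apply/eqP; rewrite eqEcard subsetT cardsU cardP cardA cardG.
  suff -> : P :&: A = set0 by rewrite cards0.
  by apply/setP => g; rewrite !inE; apply/andP => -[/notA_P/negPf ->].
have inP g : #[g] != 5 -> g \in P.
  move=> og; have : g \in P :|: A by rewrite PUA inE.
  by rewrite !inE (negPf og) andbF orbF.
exists P; split=> // [|g]; last by apply: contraNeq => /inP.
apply/normalP; split=> [|y _]; first exact: subsetT.
apply/eqP; rewrite eqEcard cardJg leqnn andbT.
by apply/subsetP => _ /imsetP[g gP ->]; rewrite inP // orderJ notA_P.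
Qed.
End Order80.

Section FixedPointFree.

Variables (gT : finGroupType) (P : {group gT}) (x : gT).
Hypotheses (cardG : #|[set: gT]| = 80) (nsPG : P <| [set: gT]) (cardP : #|P| = 16).
Hypotheses (order_out : forall g, g \notin P -> #[g] = 5) (xP : x \notin P).

Lemma order_x5 : x ^+ 5 = 1.
Proof. by rewrite -(order_out xP) expg_order. Qed.

Lemma mem_norm_P g : g \in 'N(P).
Proof. by rewrite (subsetP (normal_norm nsPG)) ?inE. Qed.

Lemma cent_x_trivial k : k \in P -> commute x k -> k = 1.
Proof.
move=> kP cxk; have xkP : x * k \notin P by rewrite groupMr.
have k5 : k ^+ 5 = 1.
  by rewrite -(mul1g (k ^+ 5)) -{1}order_x5 -expgMn // -(order_out xkP) expg_order.
have k16 : k ^+ 16 = 1 by rewrite -cardP expg_cardG.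
by move: k16; rewrite -[16]/(5 * 3 + 1) expgD expgM k5 expg1n mul1g expg1.
Qed.

Lemma x_invariant_subgroup (H : {group gT}) :
  H \subset P -> x \in 'N(H) -> H :!=: 1 -> H :=: P.
Proof.
move=> sHP nHx ntH.
have p5 : 5.-group <[x]> by rewrite /pgroup -orderE order_out.
have fix1 : 'Fix_(H | 'J)(<[x]>) = 1.
  rewrite afixJ cent_cycle; apply/trivgP/subsetP => k /setIP[kH /cent1P cxk].
  by rewrite inE (cent_x_trivial (subsetP sHP k kH)).
have := pgroup_fix_mod p5 (_ : [acts <[x]>, on H | 'J]).
rewrite fix1 cards1 astabsJ cycle_subG => /(_ nHx) H_1mod5.
have /dvdn80_1mod5 : #|H| %| 80 by rewrite (dvdn_trans (cardSg sHP)) // cardP.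
case/(_ H_1mod5) => [/eqP | cardH]; first by rewrite -trivg_card1 (negPf ntH).
by apply/eqP; rewrite eqEcard sHP cardP cardH.
Qed.

Lemma x_invariant_char (H : {group gT}) : H \char P -> H :!=: 1 -> H :=: P.
Proof.
move=> chHP; apply: x_invariant_subgroup; first exact: char_sub.
by rewrite (subsetP (char_norm_trans chHP (normal_norm nsPG))) ?inE.
Qed.

Lemma pgroup_P : 2.-group P.
Proof. by rewrite /pgroup cardP. Qed.

Lemma abelian_P : abelian P.
Proof.
apply/center_idP/x_invariant_char; first exact: center_char.
by rewrite center_nil_eq1 ?(pgroup_nil pgroup_P) // trivg_card1 cardP.
Qed.

Lemma exponent2_P : {in P, forall k, k ^+ 2 = 1}.
Proof.
have Ohm1P : 'Ohm_1(P) = P.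
  by apply/x_invariant_char; rewrite ?Ohm_char // Ohm1_eq1 trivg_card1 cardP.
have := Ohm1_abelem pgroup_P abelian_P; rewrite Ohm1P.
by case/(abelemP (isT : prime 2)).
Qed.

Lemma conj_x4_prod v : v \in P ->
  v ^ (x ^+ 4) = v ^ (x ^+ 0) * v ^ (x ^+ 1) * v ^ (x ^+ 2) * v ^ (x ^+ 3).
Proof.
move=> vP; have eP j : v ^ (x ^+ j) \in P by rewrite memJ_norm ?mem_norm_P.
set q := _ * _ * _ * _.
have qP : q \in P := groupM (groupM (groupM (eP 0) (eP 1%N)) (eP 2)) (eP 3).
have orbit_prod1 : q * v ^ (x ^+ 4) = 1.
  apply: cent_x_trivial; first exact: groupM qP (eP 4).
  apply/commute_sym/commgP/conjg_fixP.
  have e14P := groupM (groupM (groupM (eP 1%N) (eP 2)) (eP 3)) (eP 4).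
  rewrite /q 4!conjMg -5!conjgM -5!expgSr (centsP abelian_P _ e14P _ (eP 5)).
  by rewrite !mulgA order_x5 expg0.
apply/eqP; rewrite -(mulKg q (v ^ _)) orbit_prod1 mulg1 eq_invg_mul.
by rewrite -[q * q]/(q ^+ 2) exponent2_P.
Qed.

Lemma mulg_P_cycle : P * <[x]> = [set: gT].
Proof.
have ox : #|<[x]>| = 5 by rewrite -orderE order_out.
apply/eqP; rewrite eqEcard subsetT TI_cardMg ?cardP ?ox ?cardG //.
by rewrite coprime_TIg // cardP ox.
Qed.

Lemma gen_x_nontrivial v : v \in P -> v != 1 -> <<[set x; v]>> = [set: gT].
Proof.
move=> vP ntv; set H := <<[set x; v]>>.
have xH : x \in H by rewrite mem_gen // !inE eqxx.
have vH : v \in H by rewrite mem_gen // !inE eqxx orbT.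
have nHPx : x \in 'N(H :&: P).
  by rewrite -cycle_subG normsI // cycle_subG ?mem_norm_P // (subsetP (normG H)).
have ntHP : H :&: P != 1 by apply/trivgPn; exists v; rewrite ?inE ?vH.
have PH : P \subset H by rewrite -(x_invariant_subgroup (subsetIr H P) nHPx ntHP) subsetIl.
apply/eqP; rewrite eqEsubset subsetT -mulg_P_cycle mul_subG ?cycle_subG //.
Qed.

End FixedPointFree.

Section Coordinates.

Variables (gT : finGroupType) (P : {group gT}) (x v : gT).
Hypotheses (abP : abelian P) (P_exp2 : {in P, forall k, k ^+ 2 = 1}).
Hypotheses (vP : v \in P) (nPx : x \in 'N(P)) (x5 : x ^+ 5 = 1).

Local Notation e j := (v ^ (x ^+ j)).

Hypothesis e4 : e 4 = e 0 * e 1 * e 2 * e 3.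

Definition bits_val (b : bits) : gT :=
  let: (b0, b1, b2, b3) := b in e 0 ^+ b0 * e 1 ^+ b1 * e 2 ^+ b2 * e 3 ^+ b3.

Definition code_val (c : code) : gT := bits_val c.1 * x ^+ c.2.

Lemma conj_in_P j : e j \in P.
Proof. by rewrite memJ_norm // groupX. Qed.

Lemma mulg_swap (u w a : gT) : w \in P -> a \in P -> u * w * a = u * a * w.
Proof. by move=> wP aP; rewrite -!mulgA (centsP abP w wP a aP). Qed.

Lemma mulg_toggle (u a : gT) (b : bool) : a \in P -> u * a ^+ b * a = u * a ^+ (~~ b).
Proof. by move=> aP; rewrite -mulgA -expg_negb ?P_exp2. Qed.

Lemma bits_val_flip j b : j < 4 -> bits_val (flip j b) = bits_val b * e j.
Proof.
have eXP i (c : bool) : e i ^+ c \in P by rewrite groupX ?conj_in_P.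
case: b => [[[b0 b1] b2] b3]; case: j => [|[|[|[|]]]] //= _.
- by rewrite 3!(mulg_swap _ (eXP _ _) (conj_in_P 0)) -expg_negb // P_exp2 ?conj_in_P.
- by rewrite 2!(mulg_swap _ (eXP _ _) (conj_in_P 1)) mulg_toggle ?conj_in_P.
- by rewrite (mulg_swap _ (eXP _ _) (conj_in_P 2)) mulg_toggle ?conj_in_P.
- by rewrite mulg_toggle ?conj_in_P.
Qed.

Lemma bits_val_flip_e j b : j < 5 -> bits_val (flip_e j b) = bits_val b * e j.
Proof.
rewrite /flip_e; case: eqP => [-> _ | /eqP ne4 lt5]; last first.
  by rewrite bits_val_flip // ltn_neqAle ne4 -ltnS.
by rewrite !bits_val_flip // e4 !mulgA.
Qed.

Lemma mulg_shift k : k < 5 -> x ^+ k * v = e ((5 - k) %% 5) * x ^+ k.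
Proof.
move=> lt_k5; rewrite expg_mod // conjgCV; congr (v ^ _ * _).
by apply/eqP; rewrite eq_invg_mul -expgD subnKC ?x5 // ltnW.
Qed.

Lemma code_val_mul_x c : code_val (mul_x c) = code_val c * x.
Proof. by case: c => b k; rewrite /code_val /= expg_mod // expgSr mulgA. Qed.

Lemma code_val_mul_v c : code_val (mul_v c) = code_val c * v.
Proof.
case: c => b k; rewrite /code_val /= -mulgA mulg_shift // mulgA.
by rewrite bits_val_flip_e // ltn_pmod.
Qed.

Lemma code_val_mul_y m c : code_val (mul_y m c) = code_val c * (v * x ^+ m).
Proof.
rewrite /mul_y; elim: m => [|m IHm] /=; first by rewrite code_val_mul_v mulg1.
by rewrite code_val_mul_x IHm expgSr !mulgA.
Qed.

Hypotheses (genG : <<[set x; v]>> = [set: gT]) (cardG : #|[set: gT]| = 80).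

Lemma code_val_onto g : g \in <<[set x; v]>> -> g \in code_val @: [set: code].
Proof.
case/gen_prodgP=> n [f fS ->]; elim: n f fS => [|n IHn] f fS.
  rewrite big_ord0; apply/imsetP; exists ((false, false, false, false), ord0) => //.
  by rewrite /code_val /= !mulg1.
rewrite big_ord_recr /=; have /imsetP[c _ ->] := IHn (fun i => f (widen_ord (leqnSn n) i)) (fun i => fS _).
by case/set2P: (fS ord_max) => ->; rewrite -?code_val_mul_x -?code_val_mul_v imset_f.
Qed.

Lemma code_val_inj : injective code_val.
Proof.
have /imset_injP inj_val : #|code_val @: [set: code]| == #|[set: code]|.
  rewrite eqn_leq leq_imset_card cardsT card_code -cardG subset_leq_card //.
  by apply/subsetP => g _; rewrite code_val_onto ?genG.
by move=> c d /inj_val; apply; rewrite inE.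
Qed.

Lemma hamiltonian_cayley_xv (S : {set gT}) m :
  m < 5 -> x \in S -> v * x ^+ m \in S -> hamiltonian (cayley_adj S).
Proof.
move=> lt_m5 xS yS.
apply: (hamiltonian_inj code_val_inj _ _ (code_hamiltonian lt_m5)).
  by rewrite card_code -cardG cardsT.
move=> c d /or4P[]/eqP->; rewrite ?code_val_mul_x ?code_val_mul_y;
  by [apply: cayley_adj_mulr | rewrite cayley_adj_sym; apply: cayley_adj_mulr].
Qed.

End Coordinates.

Theorem mainTheorem7 (gT : finGroupType)
  (hord : #|[set: gT]| = 80%N)
  (hsyl : forall P : {group gT}, P \in 'Syl_5([set: gT]) -> ~~ (P <| [set: gT]))
  (S : {set gT}) (hgen : <<S>> = [set: gT]) :
  hamiltonian (cayley_adj S).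
Proof.
have [P [nsPG cardP order_out]] := normal_Sylow2 hord hsyl.
have [x xS xP] : exists2 x, x \in S & x \notin P.
  by apply: generator_notin; rewrite // cardP hord.
have [y yS yNx] : exists2 y, y \in S & y \notin <[x]>.
  by apply: generator_notin; rewrite // -orderE order_out ?hord.
have : y \in P * <[x]> by rewrite (mulg_P_cycle hord cardP order_out xP) inE.
case/mulsgP=> v _ vP /cycleP[i ->] def_y.
have ntv : v != 1 by apply: contraNneq yNx => v1; rewrite def_y v1 mul1g mem_cycle.
have x5 := order_x5 order_out xP.
have abP := abelian_P nsPG cardP order_out xP.
have P_exp2 := exponent2_P nsPG cardP order_out xP.
have e4 := conj_x4_prod nsPG cardP order_out xP vP.
have genG := gen_x_nontrivial hord nsPG cardP order_out xP vP ntv.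
apply: (hamiltonian_cayley_xv abP P_exp2 vP (mem_norm_P nsPG x) x5 e4 genG hord (m := i %% 5)) => //.
  exact: ltn_pmod.
by rewrite expg_mod // -def_y.
Qed.
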